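(* $X=\mathrm{Cay}(\mathfrak{a},\mathfrak{c},\mathfrak{d})$; consequently $\{\mathfrak{a},\mathfrak{c},\mathfrak{d}\}$ is Wilf-equivalent over Cayley permutations to the pattern $11$, i.e. $|\mathrm{Cay}_n(\mathfrak{a},\mathfrak{c},\mathfrak{d})|=|\mathrm{Cay}_n(11)|=n!$ for all $n$.
   Context: A Cayley permutation of length $n$ is a word $x=x(1)\cdots x(n)$ of positive integers in which every integer from $1$ to $\max(x)$ occurs; $\mathrm{Cay}_n$ is the set of these. $\mathrm{Cay}_n(11)$ is the set of permutations of $[n]$. Mesh patterns (for $x\in\mathrm{Cay}_n$): $x$ contains $\mathfrak{a}$ if there are indices $i<j<n$ with $x(j)<x(i)=x(j+1)$. $x$ contains $\mathfrak{c}$ if there are indices $i<j<n$ with $x(j+1)<x(i)<x(j)$ such that no entry of $x$ has value strictly between $x(j+1)$ and $x(i)$, no index $m\le j$ has $x(m)=x(j+1)$, and no index $m>j+1$ has $x(m)=x(i)$. $x$ contains $\mathfrak{d}$ if there is an index $i<n$ with $x(i+1)<x(i)$ such that no entry of $x$ has value strictly between $x(i+1)$ and $x(i)$, no index $m<i$ has $x(m)=x(i+1)$, and no index $m>i+1$ has $x(m)=x(i)$. $\mathrm{Cay}(\mathfrak{a},\mathfrak{c},\mathfrak{d})$ is the set of Cayley permutations containing none of them. The map $\eta$: for a permutation $\pi$ of $[n]$ and $i\in[n]$, let $J(i)=0$ if $\pi(i)=1$ and otherwise $J(i)$ is the index with $\pi(J(i))=\pi(i)-1$. The site before $\pi(1)$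 is $\eta$-active; the site after $\pi(i)$ is $\eta$-active iff $J(i)<i$, or $i<n$ and $\pi(i)<\pi(i+1)$. Let $\tilde\upsilon(\pi)(j)$ be the number of $\eta$-active sites to the left of $\pi(j)$. Then $\eta(\pi)$ is the word with $\eta(\pi)(\pi(j))=\tilde\upsilon(\pi)(j)$ for all $j$. $X=\{\eta(\pi):\pi \text{ a permutation}\}$. *)

From mathcomp Require Import all_boot.
Set Implicit Arguments. Unset Strict Implicit. Unset Printing Implicit Defensive.

(* x(i), 1-based: the i-th letter of x (i in 1..size x). *)
Definition at_ (x : seq nat) (i : nat) : nat := nth 0 x i.-1.

Definition wmax (x : seq nat) : nat := foldr maxn 0 x.

Definition cayley (x : seq nat) : Prop :=
  (forall i, 1 <= i <= size x -> 0 < at_ x i) /\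
  (forall k, 1 <= k <= wmax x -> exists2 i, 1 <= i <= size x & at_ x i = k).

Definition contains11 (x : seq nat) : Prop :=
  exists i j, [/\ 1 <= i, i < j, j <= size x & at_ x i = at_ x j].

Definition contains_a (x : seq nat) : Prop :=
  exists i j, [/\ 1 <= i, i < j, j < size x,
     at_ x j < at_ x i & at_ x i = at_ x j.+1].

Definition contains_c (x : seq nat) : Prop :=
  exists i j, [/\ 1 <= i, i < j, j < size x,
     at_ x j.+1 < at_ x i < at_ x j &
     [/\ (forall m, 1 <= m <= size x -> ~ (at_ x j.+1 < at_ x m < at_ x i)),
         (forall m, 1 <= m <= j -> at_ x m <> at_ x j.+1) &
         (forall m, j.+1 < m <= size x -> at_ x m <> at_ x i)]].

Definition contains_d (x : seq nat) : Prop :=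
  exists i, [/\ 1 <= i, i < size x, at_ x i.+1 < at_ x i &
     [/\ (forall m, 1 <= m <= size x -> ~ (at_ x i.+1 < at_ x m < at_ x i)),
         (forall m, 1 <= m < i -> at_ x m <> at_ x i.+1) &
         (forall m, i.+1 < m <= size x -> at_ x m <> at_ x i)]].

Definition cay_acd (x : seq nat) : Prop :=
  cayley x /\ ~ contains_a x /\ ~ contains_c x /\ ~ contains_d x.

Definition cay_11 (x : seq nat) : Prop := cayley x /\ ~ contains11 x.

Definition is_perm (pi : seq nat) : Prop := perm_eq pi (iota 1 (size pi)).

Definition Jidx (pi : seq nat) (i : nat) : nat :=
  if at_ pi i == 1 then 0 else (index (at_ pi i).-1 pi).+1.

(* site s (0 = before pi(1), s >= 1 = after pi(s)) is eta-active *)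
Definition active (pi : seq nat) (s : nat) : bool :=
  (s == 0) ||
  ((Jidx pi s < s) || ((s < size pi) && (at_ pi s < at_ pi s.+1))).

Definition ups (pi : seq nat) (j : nat) : nat := count (active pi) (iota 0 j).

(* eta(pi)(pi(j)) = ups(pi)(j), i.e. eta(pi)(k) = ups(pi)(pi^{-1}(k)) *)
Definition eta (pi : seq nat) : seq nat :=
  [seq ups pi (index k pi).+1 | k <- iota 1 (size pi)].

Definition card_len (P : seq nat -> Prop) (n c : nat) : Prop :=
  exists s : seq (seq nat), [/\ uniq s,
    (forall x, x \in s <-> (size x = n /\ P x)) & size s = c].

From mathcomp Require Import all_boot zify.
Set Implicit Arguments. Unset Strict Implicit. Unset Printing Implicit Defensive.

(* Every inactive site of pi is a descent, so eta pi is constant on the decreasing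
   runs of pi delimited by the active sites and grows by one from each run to the
   next; in particular eta pi is a Cayley permutation.  If eta pi v < eta pi (v-1),
   the entry r following v in pi is either larger than v (the site after v is
   active and eta pi r = eta pi v + 1) or smaller than v (the site is inactive and
   eta pi r = eta pi v); either way r violates a side condition of c and of d.  An
   occurrence of a would put an active site inside a run.
   Conversely, pi is recovered from x = eta pi by listing the positions of x by
   increasing value and, for equal values, by decreasing position (eta_inv).  For x
   avoiding a, c and d the active sites of this listing are exactly the places where
   x increases: a missed increase yields an occurrence of c or d, a superfluous active
   site one of a. *)

Definition pos (pi : seq nat) (k : nat) : nat := (index k pi).+1.

Section Sites.
Variable pi : seq nat.

Lemma at_pos k : k \in pi -> at_ pi (pos pi k) = k.
Proof. exact: nth_index. Qed.

Lemma pos_bounds k : k \in pi -> 1 <= pos pi k <= size pi.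
Proof. by rewrite -index_mem. Qed.

Lemma mem_at t : 1 <= t <= size pi -> at_ pi t \in pi.
Proof. by move=> ht; apply: mem_nth => /=; lia. Qed.

Lemma pos_inj : {in pi &, injective (pos pi)}.
Proof. by move=> k k' hk hk' e; rewrite -(at_pos hk) e at_pos. Qed.

Lemma pos_at t : uniq pi -> 1 <= t <= size pi -> pos pi (at_ pi t) = t.
Proof. by move=> U ht; rewrite /pos /at_ index_uniq //=; lia. Qed.

Lemma is_perm_uniq : is_perm pi -> uniq pi.
Proof. by move=> hpi; rewrite (perm_uniq hpi) iota_uniq. Qed.

Lemma is_perm_mem k : is_perm pi -> (k \in pi) = (1 <= k <= size pi).
Proof. by move=> hpi; rewrite (perm_mem hpi) mem_iota; lia. Qed.

Lemma at_bounds t : is_perm pi -> 1 <= t <= size pi -> 1 <= at_ pi t <= size pi.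
Proof. by move=> hpi ht; rewrite -is_perm_mem // mem_at. Qed.

Lemma perm_eq_iota1 n : perm_eq pi (iota 1 n) <-> size pi = n /\ is_perm pi.
Proof.
split=> [h | [<- //]].
have e : size pi = n by rewrite (perm_size h) size_iota.
by split; rewrite // /is_perm e.
Qed.

Lemma upsS t : ups pi t.+1 = ups pi t + active pi t.
Proof. by rewrite /ups -addn1 iotaD count_cat /= addn0. Qed.

Lemma ups1 : ups pi 1 = 1.
Proof. by []. Qed.

Lemma ups_mono : {homo ups pi : a b / a <= b}.
Proof. by apply: homo_leq => [//|y x z|t]; [exact: leq_trans | rewrite upsS leq_addr]. Qed.

Lemma ups_lt_ltn a b : ups pi a < ups pi b -> a < b.
Proof. by apply: contraTT; rewrite -!leqNgt; apply: ups_mono. Qed.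

Lemma inactive_ups_eq a s b : a <= s < b -> ups pi a = ups pi b -> ~~ active pi s.
Proof.
move=> /andP [ha hb] e; apply/negP => A.
have := ups_mono ha; have := ups_mono hb; rewrite upsS A; lia.
Qed.

Lemma ups_surj m v : 1 <= v <= ups pi m -> exists2 t, 1 <= t <= m & ups pi t = v.
Proof.
elim: m => [|m IH] hv; first by move: hv; rewrite /ups /=; lia.
case: (leqP v (ups pi m)) => h.
- by case: IH => [|t ht <-]; [lia | exists t => //; lia].
- by exists m.+1; [lia | move: hv h; rewrite upsS; case: (active pi m) => /=; lia].
Qed.

Lemma activeE s : 1 <= s -> active pi s =
  [|| at_ pi s == 1, pos pi (at_ pi s).-1 < s | (s < size pi) && (at_ pi s < at_ pi s.+1)].
Proof. by move=> s1; rewrite /active /Jidx gtn_eqF //=; case: eqP => //= _; rewrite s1. Qed.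

Lemma inactive_at_le s : 1 <= s < size pi -> ~~ active pi s -> at_ pi s.+1 <= at_ pi s.
Proof.
move=> /andP [s1 sn]; rewrite activeE // !negb_or sn /= => /and3P [_ _].
by rewrite -leqNgt.
Qed.

Lemma inactive_site s : is_perm pi -> 1 <= s < size pi -> ~~ active pi s ->
  [/\ 1 < at_ pi s, s < pos pi (at_ pi s).-1 & at_ pi s.+1 < at_ pi s].
Proof.
move=> hpi hs A; have U := is_perm_uniq hpi.
have hs' : 1 <= s <= size pi by lia.
have hb := at_bounds hpi hs'; have desc := inactive_at_le hs A.
move: A; rewrite activeE; last lia.
rewrite !negb_or -leqNgt => /and3P [/eqP a1 le_pos _].
have m : (at_ pi s).-1 \in pi by rewrite is_perm_mem //; lia.
split; first lia.
- rewrite ltn_neqAle le_pos andbT; apply/eqP => e.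
  by have := at_pos m; rewrite -e; lia.
- rewrite ltn_neqAle desc andbT; apply/eqP => /(congr1 (pos pi)).
  by rewrite !pos_at //; lia.
Qed.

Lemma ups_eq_at_le a b : 1 <= a <= b -> b <= size pi -> ups pi a = ups pi b ->
  at_ pi b <= at_ pi a.
Proof.
elim: b => [|b IH] hab hb e; first lia.
case: (leqP a b) => [ab | ba]; last by have -> : b.+1 = a by lia.
have eb : ups pi a = ups pi b by have := ups_mono ab; move: e; rewrite upsS; lia.
have hb' : 1 <= b < size pi by lia.
have hab' : a <= b < b.+1 by lia.
apply: leq_trans (inactive_at_le hb' (inactive_ups_eq hab' e)) _.
by apply: IH; lia.
Qed.

Lemma size_eta : size (eta pi) = size pi.
Proof. by rewrite size_map size_iota. Qed.

Lemma at_eta k : 1 <= k <= size pi -> at_ (eta pi) k = ups pi (pos pi k).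
Proof.
move=> hk; rewrite /at_ /eta (nth_map 0) ?size_iota; last lia.
have k1 : 0 < k by lia.
by rewrite nth_iota ?add1n ?prednK //; lia.
Qed.

End Sites.

Lemma leq_wmax (x : seq nat) i : 1 <= i <= size x -> at_ x i <= wmax x.
Proof. by move=> hi; rewrite /wmax foldrE; apply: leq_bigmax_seq => //; apply: mem_at. Qed.

Lemma wmax_le (x : seq nat) M : (forall i, 1 <= i <= size x -> at_ x i <= M) -> wmax x <= M.
Proof.
move=> h; rewrite /wmax foldrE; apply/bigmax_leqP_seq => _ /(nthP 0) [i hi <-] _.
by apply: (h i.+1); move: hi => /=; lia.
Qed.

Section EtaAvoids.
Variable pi : seq nat.
Hypothesis hpi : is_perm pi.
Local Notation x := (eta pi).
Local Notation n := (size pi).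

Let mem_pi k : 1 <= k <= n -> k \in pi.
Proof. by rewrite is_perm_mem. Qed.

Lemma eta_eq_pos_gt k k' : 1 <= k -> k < k' -> k' <= n ->
  at_ x k = at_ x k' -> pos pi k' < pos pi k.
Proof.
move=> k1 kk' k'n.
have mk : k \in pi by apply: mem_pi; lia.
have mk' : k' \in pi by apply: mem_pi; lia.
have := pos_bounds mk; have := pos_bounds mk'.
rewrite !at_eta; [|lia|lia].
case: (ltngtP (pos pi k') (pos pi k)) => // h hb' hb e.
- have hab : 1 <= pos pi k <= pos pi k' by lia.
  have hbn : pos pi k' <= n by lia.
  by have := ups_eq_at_le hab hbn e; rewrite !at_pos //; lia.
- by have := pos_inj mk' mk h; lia.
Qed.

Lemma eta_descent_follower v : 2 <= v <= n -> at_ x v < at_ x v.-1 ->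
  exists2 r, 1 <= r <= n &
    (v < r /\ at_ x r = (at_ x v).+1) \/ (r < v /\ at_ x r = at_ x v).
Proof.
move=> hv; have mv : v \in pi by apply: mem_pi; lia.
have mv' : v.-1 \in pi by apply: mem_pi; lia.
have := pos_bounds mv; have := pos_bounds mv'.
rewrite !at_eta; [|lia|lia] => hq hp /ups_lt_ltn pq.
set p := pos pi v in hp pq *.
have hp1 : 1 <= p.+1 <= n by lia.
exists (at_ pi p.+1); first exact: at_bounds.
rewrite at_eta ?at_bounds // pos_at ?is_perm_uniq // upsS.
have hps : 1 <= p < n by lia.
case A: (active pi p); [left | right]; last first.
  by have [_ _] := inactive_site hpi hps (negbT A); rewrite at_pos // addn0.
split; last by rewrite addn1.
by move: A; rewrite activeE ?at_pos //; lia.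
Qed.

Lemma eta_not_a : ~ contains_a x.
Proof.
rewrite /contains_a size_eta => -[i [j [i1 ij jn lt eq]]].
have mj : j \in pi by apply: mem_pi; lia.
have mj1 : j.+1 \in pi by apply: mem_pi; lia.
have := pos_bounds mj; have := pos_bounds mj1.
have pj1i := eta_eq_pos_gt i1 (ltnW ij : i < j.+1) jn eq.
move: lt; rewrite eq !at_eta; [|lia|lia] => /ups_lt_ltn pj hp1 hp.
have hs : pos pi j.+1 <= pos pi j.+1 < pos pi i by lia.
move: eq; rewrite !at_eta; [|lia|lia] => /esym /(inactive_ups_eq hs).
by rewrite activeE ?at_pos //=; lia.
Qed.

Lemma eta_not_d : ~ contains_d x.
Proof.
rewrite /contains_d size_eta => -[i [i1 isz lt [between before after]]].
have [|//|r hr [[ir xr] | [ri xr]]] := eta_descent_follower (v := i.+1); first lia.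
- have := between r hr; rewrite xr => nb.
  by apply: (after r); lia.
- have : r != i by apply: contraTneq lt => e; rewrite -{2}e xr ltnn.
  by move=> ri'; apply: (before r); lia.
Qed.

Lemma eta_not_c : ~ contains_c x.
Proof.
rewrite /contains_c size_eta => -[i [j [i1 ij jsz /andP [lt1 lt2] [between before after]]]].
have [|/=|r hr [[jr xr] | [rj xr]]] := eta_descent_follower (v := j.+1); first lia.
- exact: ltn_trans lt1 lt2.
- have := between r hr; rewrite xr => nb.
  by apply: (after r); lia.
- by apply: (before r); lia.
Qed.

Lemma eta_cayley : cayley x.
Proof.
have pos_x k : 1 <= k <= n -> 1 <= pos pi k <= n by move/mem_pi/pos_bounds.
split=> [k | v]; rewrite size_eta => hk.
  by rewrite at_eta // -(ups1 pi) ups_mono //; have := pos_x k hk; lia.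
have hw : wmax x <= ups pi n.
  apply: wmax_le => k; rewrite size_eta => {}hk.
  by rewrite at_eta // ups_mono //; have := pos_x k hk; lia.
have [|t ht <-] := @ups_surj pi n v; first lia.
by exists (at_ pi t); rewrite ?size_eta ?at_eta ?pos_at ?is_perm_uniq ?at_bounds.
Qed.

Lemma eta_cay_acd : cay_acd x.
Proof.
split; first exact: eta_cayley.
by split; [exact: eta_not_a | split; [exact: eta_not_c | exact: eta_not_d]].
Qed.

End EtaAvoids.

Lemma sorted_index_lt (T : eqType) (le : rel T) (s : seq T) a b :
  transitive le -> antisymmetric le -> sorted le s -> a \in s -> b \in s ->
  (index a s < index b s) = (a != b) && le a b.
Proof.
move=> tr anti ss ma mb.
have ia : index a s < size s by rewrite index_mem.
have ib : index b s < size s by rewrite index_mem.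
apply/idP/andP => [lt | [neq le_ab]].
- split; first by apply: contraTneq lt => ->; rewrite ltnn.
  by have := sorted_ltn_nth tr a ss _ _ ia ib lt; rewrite !nth_index.
- case: ltngtP => // [gt | e]; last by rewrite (index_inj a ma mb e) eqxx in neq.
  have := sorted_ltn_nth tr a ss _ _ ib ia gt; rewrite !nth_index // => le_ba.
  by case/eqP: neq; apply: anti; rewrite le_ab le_ba.
Qed.

Definition cay_le (x : seq nat) : rel nat :=
  fun a b => (at_ x a < at_ x b) || (at_ x a == at_ x b) && (b <= a).

Lemma cay_le_trans x : transitive (cay_le x).
Proof. by move=> b a c; rewrite /cay_le; lia. Qed.

Lemma cay_le_anti x : antisymmetric (cay_le x).
Proof. by move=> a b; rewrite /cay_le => /andP []; lia. Qed.

Lemma cay_le_total x : total (cay_le x).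
Proof. by move=> a b; rewrite /cay_le; lia. Qed.

Definition eta_inv (x : seq nat) : seq nat := sort (cay_le x) (iota 1 (size x)).

Lemma size_eta_inv x : size (eta_inv x) = size x.
Proof. by rewrite size_sort size_iota. Qed.

Lemma is_perm_eta_inv x : is_perm (eta_inv x).
Proof. by rewrite /is_perm size_eta_inv perm_sort. Qed.

Lemma sorted_eta_inv x : sorted (cay_le x) (eta_inv x).
Proof. exact/sort_sorted/cay_le_total. Qed.

Section EtaInverse.
Variable x : seq nat.
Local Notation s := (eta_inv x).
Local Notation n := (size x).

Lemma mem_eta_inv k : (k \in s) = (1 <= k <= n).
Proof. by rewrite (is_perm_mem _ (is_perm_eta_inv x)) size_eta_inv. Qed.

Lemma eta_inv_bounds t : 1 <= t <= n -> 1 <= at_ s t <= n.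
Proof. by move=> ht; rewrite -mem_eta_inv; apply: mem_at; rewrite size_eta_inv. Qed.

Lemma pos_eta_inv_at t : 1 <= t <= n -> pos s (at_ s t) = t.
Proof. by rewrite -(size_eta_inv x); apply/pos_at/is_perm_uniq/is_perm_eta_inv. Qed.

Lemma pos_eta_inv_ltE a b : 1 <= a <= n -> 1 <= b <= n ->
  (pos s a < pos s b) = (a != b) && cay_le x a b.
Proof.
rewrite -!mem_eta_inv => ma mb; rewrite ltnS.
exact: sorted_index_lt (@cay_le_trans x) (@cay_le_anti x) (sorted_eta_inv x) ma mb.
Qed.

Lemma eta_inv_mono a b : 1 <= a <= n -> 1 <= b <= n ->
  pos s a <= pos s b -> at_ x a <= at_ x b.
Proof.
move=> ha hb; rewrite leq_eqVlt pos_eta_inv_ltE // => /orP [/eqP e | lt].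
  by rewrite (pos_inj _ _ e) ?mem_eta_inv.
by move: lt; rewrite /cay_le; lia.
Qed.

Lemma eta_inv_ltn_value a b : 1 <= a <= n -> 1 <= b <= n ->
  at_ x a < at_ x b -> pos s a < pos s b.
Proof.
move=> ha hb lt; rewrite pos_eta_inv_ltE // /cay_le lt /= andbT.
by apply: contraTneq lt => ->; rewrite ltnn.
Qed.

Lemma eta_inv_ltn_tie a b : 1 <= a <= n -> 1 <= b <= n ->
  at_ x a = at_ x b -> b < a -> pos s a < pos s b.
Proof. by move=> ha hb e ba; rewrite pos_eta_inv_ltE // /cay_le e; lia. Qed.

Section AdjacentEntries.
Variable t : nat.
Hypothesis ht : 1 <= t < n.
Local Notation a := (at_ s t).
Local Notation c := (at_ s t.+1).

Let ha : 1 <= a <= n. Proof. by apply: eta_inv_bounds; lia. Qed.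
Let hc : 1 <= c <= n. Proof. by apply: eta_inv_bounds; lia. Qed.
Let pa : pos s a = t. Proof. by apply: pos_eta_inv_at; lia. Qed.
Let pc : pos s c = t.+1. Proof. by apply: pos_eta_inv_at; lia. Qed.

Lemma eta_inv_plateau_inactive : ~ contains_a x -> at_ x a = at_ x c -> ~~ active s t.
Proof.
move=> x_not_a e.
have := pos_eta_inv_ltE ha hc; rewrite pa pc ltnSn /cay_le e ltnn eqxx /=.
move=> /esym /andP [ne le_ca].
have ca : c < a by rewrite ltn_neqAle eq_sym ne le_ca.
rewrite activeE ?size_eta_inv; last lia.
apply/negP; case/or3P => [/eqP a1 | pa1 | /andP [_ ac]]; [lia | | lia].
have hA : 1 <= a.-1 <= n by lia.
have := pos_eta_inv_ltE hA ha; rewrite pa pa1 /cay_le.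
move=> /esym /andP [_ /orP [lt | /andP [_ aa]]]; last lia.
have cA : c != a.-1 by apply: contraTneq lt => <-; rewrite e ltnn.
apply: x_not_a; exists c, a.-1; rewrite prednK; last lia.
by split; lia.
Qed.

Hypothesis ascent : at_ x a < at_ x c.

Lemma eta_inv_ascent_succ : cayley x -> at_ x c = (at_ x a).+1.
Proof.
case=> _ x_onto; apply/eqP; rewrite eqn_leq ascent andbT leqNgt; apply/negP => gap.
have cw := leq_wmax hc; have [|k hk xk] := x_onto (at_ x a).+1; first lia.
have := eta_inv_ltn_value ha hk; have := eta_inv_ltn_value hk hc.
by rewrite pa pc xk; lia.
Qed.

Lemma eta_inv_last_of_value m : 1 <= m <= n -> at_ x m = at_ x a -> a <= m.
Proof.
move=> hm e; rewrite leqNgt; apply/negP => ma.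
have := eta_inv_ltn_tie ha hm (esym e) ma; rewrite pa => tm.
by have := eta_inv_mono hc hm; rewrite pc e; lia.
Qed.

Lemma eta_inv_first_of_value m : 1 <= m <= n -> at_ x m = at_ x c -> m <= c.
Proof.
move=> hm e; rewrite leqNgt; apply/negP => cm.
have := eta_inv_ltn_tie hm hc e cm; rewrite pc => mt.
by have := eta_inv_mono hm ha; rewrite pa e; lia.
Qed.

Lemma eta_inv_ascent_active : cayley x -> ~ contains_c x -> ~ contains_d x -> active s t.
Proof.
move=> x_cay x_not_c x_not_d; have xc := eta_inv_ascent_succ x_cay.
apply/negPn/negP => /(inactive_site (is_perm_eta_inv x)).
rewrite size_eta_inv => /(_ ht) [a1 pa1 ca].
have hA : 1 <= a.-1 <= n by lia.
have le_cA : at_ x c <= at_ x a.-1 by apply: eta_inv_mono; rewrite // pc.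
have last_a := eta_inv_last_of_value; have first_c := eta_inv_first_of_value.
case: ltngtP le_cA => // [lt _ | e _].
- have cA : c != a.-1 by apply: contraTneq lt => ->; rewrite ltnn.
  apply: x_not_c; exists c, a.-1; rewrite prednK; last lia.
  split; [lia | lia | lia | lia | split].
  + by move=> m _; lia.
  + by move=> m hm /last_a; lia.
  + by move=> m hm /first_c; lia.
- apply: x_not_d; exists a.-1; rewrite prednK; last lia.
  split; [lia | lia | lia | split].
  + by move=> m _; lia.
  + by move=> m hm /last_a; lia.
  + by move=> m hm; rewrite -e => /first_c; lia.
Qed.

End AdjacentEntries.

Lemma eta_inv_first : cayley x -> 1 <= n -> at_ x (at_ s 1) = 1.
Proof.
move=> [x_pos x_onto] n1; have h1 : 1 <= 1 <= n by lia.
have hs1 := eta_inv_bounds h1; have := x_pos _ hs1.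
have [|k hk xk] := x_onto 1; first by have := x_pos _ h1; have := leq_wmax h1; lia.
by have := eta_inv_mono hs1 hk; rewrite pos_eta_inv_at // xk => /(_ (ltn0Sn _)); lia.
Qed.

Hypothesis x_acd : cay_acd x.

Lemma ups_eta_inv t : 1 <= t <= n -> ups s t = at_ x (at_ s t).
Proof.
have [x_cay [x_not_a [x_not_c x_not_d]]] := x_acd.
elim: t => [|t IH] ht; first lia.
have [-> | t0] := posnP t; first by rewrite ups1 eta_inv_first //; lia.
have ht' : 1 <= t < n by lia.
rewrite upsS IH; last lia.
have ha : 1 <= at_ s t <= n by apply: eta_inv_bounds; lia.
have hc : 1 <= at_ s t.+1 <= n by apply: eta_inv_bounds; lia.
have := eta_inv_mono ha hc; rewrite !pos_eta_inv_at; [|lia|lia].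
move=> /(_ (leqnSn t)); rewrite leq_eqVlt => /orP [/eqP e | lt].
- by rewrite (negbTE (eta_inv_plateau_inactive ht' x_not_a e)) addn0.
- by rewrite eta_inv_ascent_active // addn1 eta_inv_ascent_succ.
Qed.

Lemma eta_eta_inv : eta s = x.
Proof.
apply: (@eq_from_nth _ 0); first by rewrite size_eta size_eta_inv.
move=> i; rewrite size_eta size_eta_inv => hi.
have hi1 : 1 <= i.+1 <= n by lia.
have mi : i.+1 \in s by rewrite mem_eta_inv.
have := pos_bounds mi; rewrite size_eta_inv => hp.
rewrite -[nth _ _ _]/(at_ (eta s) i.+1) at_eta ?size_eta_inv // ups_eta_inv //.
by rewrite at_pos.
Qed.

End EtaInverse.

Lemma eta_invK (pi : seq nat) : is_perm pi -> eta_inv (eta pi) = pi.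
Proof.
move=> hpi; have U := is_perm_uniq hpi.
apply: (sorted_eq (@cay_le_trans _) (@cay_le_anti _) (sorted_eta_inv _)).
- apply/(sortedP 0) => i hi.
  have hi1 : 1 <= i.+1 < size pi by lia.
  rewrite -[nth _ _ _]/(at_ pi i.+1) -[nth _ _ i.+1]/(at_ pi i.+2) /cay_le.
  rewrite !at_eta ?at_bounds // ?pos_at // ?upsS; try lia.
  case A: (active pi i.+1); first by rewrite addn1 ltnSn.
  by rewrite addn0 ltnn eqxx /= inactive_at_le // A.
- by rewrite perm_sort size_eta perm_sym.
Qed.

Lemma cay_11_is_perm x : cay_11 x <-> is_perm x.
Proof.
split=> [[[x_pos x_onto] x_no11] | hx].
- have Ux : uniq x.
    apply/(uniqP 0) => i j; rewrite !inE /= => hi hj e.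
    change (at_ x i.+1 = at_ x j.+1) in e.
    case: (ltngtP i j) => // h; case: x_no11.
      by exists i.+1, j.+1; split; lia.
    by exists j.+1, i.+1; split; lia.
  have mem : x =i iota 1 (wmax x).
    move=> k; rewrite mem_iota; apply/idP/idP => [/(nthP 0) [i hi <-] | hk].
      rewrite -[nth 0 x i]/(at_ x i.+1).
      by have := x_pos i.+1; have := @leq_wmax x i.+1; move: hi => /=; lia.
    by have [|i hi <-] := x_onto k; [lia | apply: mem_at].
  have px := uniq_perm Ux (iota_uniq _ _) mem.
  by have := perm_size px; rewrite size_iota /is_perm => ->.
- have U := is_perm_uniq hx.
  have hb i : 1 <= i <= size x -> 1 <= at_ x i <= size x := at_bounds hx.
  split; first split.
  + by move=> i /hb; lia.
  + move=> k hk; have : wmax x <= size x by apply: wmax_le => i /hb; lia.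
    by move=> wn; exists (pos x k); rewrite ?at_pos ?pos_bounds // is_perm_mem //; lia.
  + move=> [i [j [i1 ij jn e]]].
    by have := congr1 (pos x) e; rewrite !pos_at //; lia.
Qed.

Lemma card_len_perm_image (P : seq nat -> Prop) n (f : seq nat -> seq nat) :
  {in permutations (iota 1 n) &, injective f} ->
  (forall x, size x = n /\ P x <-> exists2 pi, perm_eq pi (iota 1 n) & f pi = x) ->
  card_len P n n`!.
Proof.
move=> f_inj f_onto; exists (map f (permutations (iota 1 n))); split.
- by rewrite map_inj_in_uniq ?permutations_uniq.
- move=> x; rewrite f_onto; split=> [/mapP [pi] | [pi]].
    by rewrite mem_permutations => hpi ->; exists pi.
  by rewrite -mem_permutations => hpi <-; apply: map_f.
- by rewrite size_map size_permutations ?iota_uniq // size_iota.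
Qed.

Lemma eta_imageP x : (exists pi, is_perm pi /\ eta pi = x) <-> cay_acd x.
Proof.
split=> [[pi [hpi <-]] | x_acd]; first exact: eta_cay_acd.
by exists (eta_inv x); split; [exact: is_perm_eta_inv | exact: eta_eta_inv].
Qed.

Theorem theorem7p5 :
  (forall x : seq nat, (exists pi, is_perm pi /\ eta pi = x) <-> cay_acd x) /\
  (forall n : nat, card_len cay_acd n n`! /\ card_len cay_11 n n`!).
Proof.
split=> [x | n]; first exact: eta_imageP.
split.
- apply: (card_len_perm_image (f := eta)).
    move=> p q; rewrite !mem_permutations => /perm_eq_iota1 [_ hp] /perm_eq_iota1 [_ hq] e.
    by rewrite -(eta_invK hp) e eta_invK.
  move=> x; rewrite -eta_imageP.
  split=> [[<- [pi [hpi <-]]] | [pi /perm_eq_iota1 [<- hpi] <-]].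
    by exists pi; rewrite // size_eta.
  by split; [rewrite size_eta | exists pi].
- apply: (card_len_perm_image (f := id)) => // x.
  rewrite cay_11_is_perm -perm_eq_iota1.
  by split=> [hx | [pi hpi <-]]; first exists x.
Qed.
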